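(* Let $d=\infty$, $C>0$, and let ${\boldsymbol\gamma}$ be finite-order weights (of some order $\omega\in\mathbb N$) with ${\boldsymbol\gamma}\in\mathcal S_{\infty,C}$. Then $$\mathrm{decay}(T^\uparrow_{\infty,C}{\boldsymbol\gamma})=\mathrm{decay}({\boldsymbol\gamma})\ge1.$$
   Context: $\mathcal U_\infty$ is the set of finite subsets of $\mathbb N$; weights are families $(\gamma_u)_{u\in\mathcal U_\infty}$ of non-negative reals. Finite-order weights of order $\omega\in\mathbb N$: $\gamma_u=0$ whenever $|u|>\omega$. For a family $(a_v)_{v\in V}$ of non-negative reals over a countably infinite index set, $\mathrm{decay}((a_v))=\sup\{\tau>0:\sum_va_v^{1/\tau}<\infty\}$, $\sup\emptyset=0$. For $C>0$: $\mathcal S_{\infty,C}=\{{\boldsymbol\gamma}:\sum_vC^{2|v|}\gamma_v<\infty\}$ and $(T^\uparrow_{\infty,C}{\boldsymbol\gamma})_u=\sum_{v\supseteq u}C^{2|v|}\gamma_v$. *)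

From HB Require Import structures.
From mathcomp Require Import all_boot all_order all_algebra.
From mathcomp Require Import finmap.
From mathcomp Require Import all_classical all_reals all_analysis.
Set Implicit Arguments. Unset Strict Implicit. Unset Printing Implicit Defensive.
Import Order.TTheory GRing.Theory Num.Theory.
Local Open Scope classical_set_scope.
Local Open Scope ring_scope.

Definition Uinf := {fset nat}.

Definition summable (R : realType) (T : choiceType) (a : T -> R) : Prop :=
  (\esum_(v in [set: T]) (a v)%:E < +oo)%E.

(* Including 0 in the set implements
   the convention sup(empty) = 0 and does not change the sup otherwise (all tau > 0). *)
Definition decay (R : realType) (T : choiceType) (a : T -> R) : \bar R :=
  ereal_sup ([set 0%E] `|`
    [set (tau%:E)%E | tau in [set tau : R | 0 < tau /\ summable (fun v => powR (a v) tau^-1)]]).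

Definition weights (R : realType) (g : Uinf -> R) : Prop := forall u, 0 <= g u.

Definition finite_order (R : realType) (omega : nat) (g : Uinf -> R) : Prop :=
  forall u : Uinf, (omega < #|` u|)%N -> g u = 0.

Definition S_inf (R : realType) (C : R) (g : Uinf -> R) : Prop :=
  summable (fun v : Uinf => C ^+ (2 * #|` v|) * g v).

(* (T^up_{infinity,C} gamma)_u = sum_{v superset of u} C^(2|v|) gamma_v
   (finite whenever gamma is in S_{infinity,C}; taken as a real via fine). *)
Definition Tup (R : realType) (C : R) (g : Uinf -> R) (u : Uinf) : R :=
  fine (\esum_(v in [set v : Uinf | (u `<=` v)%fset]) (C ^+ (2 * #|` v|) * g v)%:E).

(* On the support of a weight family of order [omega] the factor [C ^+ (2 * #|v|)]
   lies between [min 1 (C ^+ (2 * omega))] and [max 1 (C ^+ (2 * omega))], so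
   [gamma_u] is bounded by a multiple of [(T gamma)_u], and summability of
   [(T gamma)^(1/tau)] gives that of [gamma^(1/tau)].  Conversely, for [tau >= 1]
   the map [x |-> x^(1/tau)] is subadditive, so [(T gamma)_u^(1/tau)] is at most
   the sum of [(C^(2|v|) gamma_v)^(1/tau)] over [v] containing [u]; exchanging the
   sums, each [v] is counted [2^|v| <= 2^omega] times.  Finally [gamma] itself is
   summable, so both decays are at least 1 and the admissible [tau >= 1] agree. *)

From HB Require Import structures.
From mathcomp Require Import all_boot all_order all_algebra.
From mathcomp Require Import finmap.
From mathcomp Require Import all_classical all_reals all_analysis.
From mathcomp Require Import ring.
Set Implicit Arguments.
Unset Strict Implicit.
Unset Printing Implicit Defensive.
Import Order.TTheory GRing.Theory Num.Theory.
Local Open Scope classical_set_scope.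
Local Open Scope ring_scope.

Section esum_nonneg.
Variables (R : realType) (T : choiceType).
Implicit Types (J : set T) (a b : T -> R).

Lemma esumZ_le J (k : R) a : 0 <= k -> (forall v, 0 <= a v) ->
  (\esum_(v in J) (k * a v)%:E <= k%:E * \esum_(v in J) (a v)%:E)%E.
Proof.
move=> k0 a0; apply: ge_ereal_sup => _ [X [finX XJ] <-].
under eq_fsbigr do rewrite EFinM.
rewrite -ge0_mule_fsumr; last by move=> i; rewrite lee_fin.
by rewrite lee_wpmul2l ?lee_fin //; apply: ereal_sup_ubound; exists X.
Qed.

Lemma summable_le_scale (k : R) a b :
  (forall v, 0 <= a v) -> (forall v, 0 <= b v) -> 0 <= k ->
  (forall v, a v <= k * b v) -> summable b -> summable a.
Proof.
rewrite /summable => a0 b0 k0 le_ab b_fin.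
apply: (@le_lt_trans _ _ (\esum_(v in [set: T]) (k * b v)%:E)).
  by apply: le_esum => v _; rewrite lee_fin.
apply: le_lt_trans (@esumZ_le [set: T] k b k0 b0) _.
have : (0 <= \esum_(v in [set: T]) (b v)%:E)%E.
  by apply: esum_ge0 => v _; rewrite lee_fin.
by case: (\esum_(v in _) _) b_fin => [s| |] //= _ _; rewrite -EFinM ltry.
Qed.

Lemma le_mul_powR (x s p : R) : 0 <= x -> 0 < p -> p <= 1 -> x `^ p <= s ->
  x <= s `^ ((1 - p) / p) * x `^ p.
Proof.
move=> x0 p0 p1 xs; have [->|xn0] := eqVneq x 0.
  by rewrite mulr_ge0 // powR_ge0.
have {1}-> : x = (x `^ p) `^ ((1 - p) / p) * x `^ p.
  rewrite -powRrM -powRD; last by rewrite xn0 implybT.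
  have -> : p * ((1 - p) / p) + p = 1 by field; rewrite gt_eqF.
  by rewrite powRr1.
rewrite ler_wpM2r ?powR_ge0 //; apply: ge0_ler_powR => //.
- by rewrite divr_ge0 ?subr_ge0 // ltW.
- by rewrite nnegrE powR_ge0.
- by rewrite nnegrE (le_trans _ xs) // powR_ge0.
Qed.

Lemma fine_esum_powR_le J a p : (forall v, 0 <= a v) -> 0 < p -> p <= 1 ->
  ((fine (\esum_(v in J) (a v)%:E) `^ p)%:E
    <= \esum_(v in J) (a v `^ p)%:E)%E.
Proof.
move=> a0 p0 p1.
have : (0 <= \esum_(v in J) (a v `^ p)%:E)%E.
  by apply: esum_ge0 => v _; rewrite lee_fin powR_ge0.
case Es : (\esum_(v in J) _) => [s| |] //=; rewrite ?leey // lee_fin => s0.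
have le_s v : J v -> a v `^ p <= s.
  move=> Jv; rewrite -lee_fin -Es; apply: esum_ge; exists [set v].
    by split; [exact: finite_set1 | move=> w ->].
  by rewrite fsbig_set1.
(* each [a v <= K * a v `^ p], so the sum of the [a v] is at most [K * s = s `^ p^-1] *)
set K := s `^ ((1 - p) / p).
have le_Ks : (\esum_(v in J) (a v)%:E <= (K * s)%:E)%E.
  apply: (@le_trans _ _ (\esum_(v in J) (K * a v `^ p)%:E)).
    by apply: le_esum => v Jv; rewrite lee_fin le_mul_powR ?le_s.
  rewrite EFinM -Es; apply: esumZ_le; first exact: powR_ge0.
  by move=> v; apply: powR_ge0.
have : (0 <= \esum_(v in J) (a v)%:E)%E.
  by apply: esum_ge0 => v _; rewrite lee_fin.
case: (\esum_(v in J) _) le_Ks => [e| |] //= le_eKs e0; rewrite lee_fin.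
rewrite lee_fin in e0 le_eKs.
apply: le_trans (ge0_ler_powR (ltW p0) _ _ le_eKs) _; rewrite ?nnegrE //.
  by rewrite mulr_ge0 // powR_ge0.
have [->|s_neq0] := eqVneq s 0; first by rewrite mulr0 powR0 // gt_eqF.
rewrite powRM ?powR_ge0 // -powRrM -powRD; last by rewrite s_neq0 implybT.
have -> : (1 - p) / p * p + p = 1 by field; rewrite gt_eqF.
by rewrite powRr1.
Qed.

End esum_nonneg.

Lemma esum_cst_fsubset (R : realType) (K : choiceType) (v : {fset K}) (x : R) :
  0 <= x ->
  \esum_(u in [set u : {fset K} | (u `<=` v)%fset]) x%:E
    = ((2 ^ #|` v|)%:R * x)%:E.
Proof.
move=> x0; have -> : [set u | (u `<=` v)%fset] = [set` fpowerset v].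
  by apply/seteqP; split => u /=; rewrite fpowersetE.
rewrite esum_fset; [|exact: finite_fset|by move=> u _; rewrite lee_fin].
rewrite fsbig_finite; last exact: finite_fset.
rewrite set_fsetK sumEFin big_const_seq.
by rewrite count_predT card_fpowerset iter_addr_0 mulr_natl.
Qed.

Lemma esum_comm (R : realType) (T1 T2 : choiceType) (f : T1 -> T2 -> \bar R) :
  (forall u v, 0 <= f u v)%E ->
  (\esum_(u in [set: T1]) \esum_(v in [set: T2]) f u v
   = \esum_(v in [set: T2]) \esum_(u in [set: T1]) f u v)%E.
Proof.
move=> f0; rewrite esum_esum // esum_esum //.
rewrite (@reindex_esum R _ _ ([set: T2] `*`` fun=> [set: T1])
  ([set: T1] `*`` fun=> [set: T2]) (fun k : T2 * T1 => (k.2, k.1))) //.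
by split=> [[v u] _ //|[v u] [v' u'] _ _ [-> ->] //|[u v] _]; exists (v, u).
Qed.

Section decay.
Variable R : realType.

Lemma summable_powR_invr1 (T : choiceType) (a : T -> R) :
  (forall v, 0 <= a v) -> summable a -> summable (fun v => a v `^ 1^-1).
Proof.
by move=> a0 a_sum; rewrite /summable; under eq_esum do rewrite invr1 powRr1 //.
Qed.

Lemma one_le_decay (T : choiceType) (a : T -> R) :
  (forall v, 0 <= a v) -> summable a -> (1%:E <= decay a)%E.
Proof.
move=> a0 a_sum; apply: ereal_sup_ubound; right; exists 1 => //.
by split; [exact: ltr01 | exact: summable_powR_invr1].
Qed.

Lemma decay_eq (T1 T2 : choiceType) (a : T1 -> R) (b : T2 -> R) :
  (forall t, 0 < t -> summable (fun v => b v `^ t^-1) ->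
                      summable (fun v => a v `^ t^-1)) ->
  (forall t, 1 <= t -> summable (fun v => a v `^ t^-1) ->
                       summable (fun v => b v `^ t^-1)) ->
  (forall v, 0 <= a v) -> summable a -> decay b = decay a.
Proof.
move=> ba ab a0 a_sum; apply/eqP; rewrite eq_le; apply/andP; split.
  apply: le_ereal_sup => _ [->|[t [t0 bt] <-]]; first by left.
  by right; exists t => //; split => //; apply: ba.
apply: ge_ereal_sup => _ [->|[t [t0 at_] <-]].
  by apply: ereal_sup_ubound; left.
have [t1|t1] := lerP 1 t.
  by apply: ereal_sup_ubound; right; exists t => //; split => //; apply: ab.
apply: (@le_trans _ _ 1%:E); first by rewrite lee_fin ltW.
apply: ereal_sup_ubound; right; exists 1 => //; split; first exact: ltr01.
by apply: ab => //; exact: summable_powR_invr1.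
Qed.

End decay.

Lemma exprn_min_max (R : realDomainType) (x : R) (n m : nat) :
  0 < x -> (n <= m)%N -> Num.min 1 (x ^+ m) <= x ^+ n <= Num.max 1 (x ^+ m).
Proof.
move=> x0 nm; rewrite ge_min le_max; have [x1|x1] := lerP 1 x.
  by rewrite exprn_ege1 // (ler_weXn2l x1 nm) orbT.
by rewrite (ler_wiXn2l (ltW x0) (ltW x1) nm) exprn_ile1 ?orbT // ltW.
Qed.

Section finite_order_weights.
Variables (R : realType) (C : R) (omega : nat) (g : Uinf -> R).
Hypotheses (C_gt0 : 0 < C) (g_ge0 : weights g) (g_order : finite_order omega g).

Let gC (v : Uinf) := C ^+ (2 * #|` v|) * g v.
Let cmin := Num.min 1 (C ^+ (2 * omega)).
Let cmax := Num.max 1 (C ^+ (2 * omega)).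

Let cmin_gt0 : 0 < cmin. Proof. by rewrite lt_min ltr01 exprn_gt0. Qed.
Let cmax_ge0 : 0 <= cmax. Proof. by rewrite le_max ler01. Qed.
Let gC_ge0 v : 0 <= gC v.
Proof. by rewrite mulr_ge0 // exprn_ge0 // ltW. Qed.

Lemma gC_bounds v : cmin * g v <= gC v <= cmax * g v.
Proof.
have [v_small|v_large] := leqP #|` v| omega; last first.
  by rewrite /gC g_order // !mulr0 lexx.
have /andP[lo hi] : cmin <= C ^+ (2 * #|` v|) <= cmax.
  by apply: exprn_min_max; rewrite // leq_mul2l v_small orbT.
by rewrite !ler_wpM2r.
Qed.

Hypothesis g_S : S_inf C g.

Lemma Tup_esum u :
  (Tup C g u)%:E = \esum_(v in [set v : Uinf | (u `<=` v)%fset]) (gC v)%:E.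
Proof.
have le_S : (\esum_(v in [set v : Uinf | (u `<=` v)%fset]) (gC v)%:E
              <= \esum_(v in [set: Uinf]) (gC v)%:E)%E.
  by rewrite esum_mkcond; apply: le_esum => v _; case: ifP; rewrite ?lee_fin.
rewrite fineK // ge0_fin_numE; first exact: le_lt_trans le_S g_S.
by apply: esum_ge0 => v _; rewrite lee_fin gC_ge0.
Qed.

Lemma Tup_ge0 u : 0 <= Tup C g u.
Proof. by rewrite -lee_fin Tup_esum; apply: esum_ge0 => v _; rewrite lee_fin. Qed.

Lemma gC_le_Tup u : gC u <= Tup C g u.
Proof.
rewrite -lee_fin Tup_esum; apply: esum_ge; exists [set u].
  by split; [exact: finite_set1 | move=> w -> /=; exact: fsubset_refl].
by rewrite fsbig_set1.
Qed.

(* Concavity of [x `^ p] moves the power inside the sum defining [Tup]; each [v]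
   is then counted once for each of its [2 ^ #|` v|] subsets. *)
Lemma esum_Tup_powR_le p : 0 < p -> p <= 1 ->
  (\esum_(u in [set: Uinf]) (Tup C g u `^ p)%:E
    <= \esum_(v in [set: Uinf]) ((2 ^ #|` v|)%:R * gC v `^ p)%:E)%E.
Proof.
move=> p0 p1.
apply: (@le_trans _ _ (\esum_(u in [set: Uinf])
    \esum_(v in [set v : Uinf | (u `<=` v)%fset]) (gC v `^ p)%:E)).
  by apply: le_esum => u _; exact: fine_esum_powR_le.
under eq_esum => u _ do rewrite esum_mkcond.
rewrite esum_comm; last by move=> u v; case: ifP; rewrite ?lee_fin ?powR_ge0.
apply: le_esum => v _; rewrite -(esum_cst_fsubset v (powR_ge0 (gC v) p)).
by rewrite [leRHS]esum_mkcond.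
Qed.

Lemma summable_Tup_powR p : 0 < p -> p <= 1 ->
  summable (fun v => g v `^ p) -> summable (fun u => Tup C g u `^ p).
Proof.
move=> p0 p1 gp_sum; rewrite /summable.
apply: le_lt_trans (esum_Tup_powR_le p0 p1) _.
apply: (@summable_le_scale _ _ ((2 ^ omega)%:R * cmax `^ p)) gp_sum.
- by move=> v; rewrite mulr_ge0 ?powR_ge0.
- by move=> v; rewrite powR_ge0.
- by rewrite mulr_ge0 ?powR_ge0.
move=> v; have [v_small|v_large] := leqP #|` v| omega; last first.
  by rewrite /gC g_order // mulr0 powR0 ?gt_eqF // !mulr0.
rewrite -mulrA -powRM //; apply: ler_pM; rewrite ?powR_ge0 ?ler_nat ?leq_pexp2l //.
apply: ge0_ler_powR; rewrite ?nnegrE ?gC_ge0 ?mulr_ge0 ?(ltW p0) //.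
by case/andP: (gC_bounds v).
Qed.

Lemma summable_powR_of_Tup p : 0 < p ->
  summable (fun u => Tup C g u `^ p) -> summable (fun v => g v `^ p).
Proof.
move=> p0; apply: (@summable_le_scale _ _ (cmin^-1 `^ p)).
- by move=> v; rewrite powR_ge0.
- by move=> v; rewrite powR_ge0.
- by rewrite powR_ge0.
have cmin_inv_ge0 : 0 <= cmin^-1 by rewrite invr_ge0 ltW.
move=> v; rewrite -powRM ?Tup_ge0 //.
apply: ge0_ler_powR; rewrite ?nnegrE ?mulr_ge0 ?Tup_ge0 ?(ltW p0) //.
rewrite ler_pdivlMl //; apply: le_trans (gC_le_Tup v).
by case/andP: (gC_bounds v).
Qed.

Lemma summable_weights : summable g.
Proof.
apply: (@summable_le_scale _ _ cmin^-1 _ gC) g_S; rewrite ?invr_ge0 ?ltW //.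
by move=> v; rewrite ler_pdivlMl //; case/andP: (gC_bounds v).
Qed.

End finite_order_weights.

Theorem mainTheorem12 (R : realType) (C : R) (omega : nat) (g : Uinf -> R) :
  0 < C -> weights g -> finite_order omega g -> S_inf C g ->
  decay (Tup C g) = decay g /\ (1%:E <= decay g)%E.
Proof.
move=> C_gt0 g_ge0 g_order g_S.
have g_sum := summable_weights C_gt0 g_ge0 g_order g_S.
split; last exact: one_le_decay g_ge0 g_sum.
apply: (decay_eq _ _ g_ge0 g_sum) => t t_bound.
- by apply: (summable_powR_of_Tup C_gt0 g_ge0 g_order g_S); rewrite invr_gt0.
- have t_gt0 : 0 < t := lt_le_trans ltr01 t_bound.
  by apply: (summable_Tup_powR C_gt0 g_ge0 g_order); rewrite ?invr_gt0 ?invf_le1.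
Qed.
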